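(* Let $S'\le S$ be finite $p$-groups, $\mathcal{F}_1$ a fusion system over $S$, $\mathcal{F}_2,\mathcal{F}_e$ fusion systems over $S'$ with $\mathcal{F}_e\subseteq\mathcal{F}_1\cap\mathcal{F}_2$, $\mathcal{F}=\langle\mathcal{F}_1,\mathcal{F}_2\rangle_S$, $\Lambda=\{\mathcal{F}_1,\mathcal{F}_2,\mathcal{F}_e\}$, and $\mathcal{C}$ a family of subgroups of $S$ containing $S'$ and closed under $\mathcal{F}$-conjugation and overgroups. Let $P\in\mathcal{C}$ and assume that for every $Q\cong_{\mathcal{F}}P$, $\operatorname{Hom}_{\mathcal{F}_e}(Q,S')=\operatorname{Hom}_{\mathcal{F}_1}(Q,S')\cap\operatorname{Hom}_{\mathcal{F}_2}(Q,S')$, and that either (1) $\operatorname{Hom}_{\mathcal{F}}(P,S')=\operatorname{Hom}_{\mathcal{H}}(P,S')$ for some $\mathcal{H}\in\{\mathcal{F}_1,\mathcal{F}_2\}$, or (2) $\operatorname{Aut}_{\mathcal{F}}(P)=\operatorname{Aut}_{\mathcal{F}_2}(P)$ and, for every $Q$ with $Q\cong_{\mathcal{F}}P$ but $Q\not\cong_{\mathcal{F}_e}P$, $\operatorname{Hom}_{\mathcal{F}_e}(Q,S')=\operatorname{Hom}_{\mathcal{F}_2}(Q,S')$. Then the graph $\operatorname{Rep}_{\mathcal{F}}(P,\Lambda)$ is a tree. In particular $H_1(\operatorname{Rep}_{\mathcal{F}}(P,\Lambda);\mathcal{R})=0$ for every commutative ring $\mathcal{R}$.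
   Context: $\langle\mathcal{F}_1,\mathcal{F}_2\rangle_S$ is the smallest fusion system over $S$ containing both. For a fusion system $\mathcal{H}$ over $S_{\mathcal{H}}$ ($S_{\mathcal{F}_1}=S$, $S_{\mathcal{F}_2}=S_{\mathcal{F}_e}=S'$), $\operatorname{Rep}_{\mathcal{F}}(P,\mathcal{H})=\operatorname{Hom}_{\mathcal{F}}(P,S_{\mathcal{H}})/\sim$ where $\varphi\sim\psi$ iff there is an $\mathcal{H}$-isomorphism $\theta:\varphi(P)\to\psi(P)$ with $\theta\varphi=\psi$. $\operatorname{Rep}_{\mathcal{F}}(P,\Lambda)$ is the bipartite graph with vertex set $\operatorname{Rep}_{\mathcal{F}}(P,\mathcal{F}_1)\sqcup\operatorname{Rep}_{\mathcal{F}}(P,\mathcal{F}_2)$ and edge set $\operatorname{Rep}_{\mathcal{F}}(P,\mathcal{F}_e)$, the edge $[\varphi]_{\mathcal{F}_e}$ joining $[\varphi]_{\mathcal{F}_2}$ and $[\iota_{S'}^S\varphi]_{\mathcal{F}_1}$. *)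

From mathcomp Require Import all_boot all_order all_algebra all_fingroup all_solvable.
Set Implicit Arguments. Unset Strict Implicit. Unset Printing Implicit Defensive.
Import GRing.Theory.

(* A fusion system is encoded by a boolean predicate  F P f  meaning:        *)
(*   "the restriction of f to P is a morphism in Hom_F(P, S)".               *)
(* Morphisms are represented by finite functions gT -> gT; only their        *)
(* values on P matter (axiom fs_ext).                                        *)

Section Fusion.
Variable gT : finGroupType.

Definition fsys := {set gT} -> {ffun gT -> gT} -> bool.

Definition conjf (s : gT) : {ffun gT -> gT} := [ffun x : gT => (x ^ s)%g].
Definition compf (g f : {ffun gT -> gT}) : {ffun gT -> gT} := [ffun x => g (f x)].

Definition is_fusion_system (S : {set gT}) (F : fsys) : Prop :=
  [/\
      (forall P f, F P f ->
         [/\ group_set P, P \subset S, {in P &, {morph f : x y / (x * y)%g}},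
             {in P &, injective f} & f @: P \subset S]),
      (forall P (f g : {ffun gT -> gT}), F P f -> {in P, f =1 g} -> F P g),
      (forall P s, group_set P -> P \subset S -> s \in S -> F P (conjf s)),
      (forall P Q (f g : {ffun gT -> gT}), F P f -> F Q g -> f @: P \subset Q -> F P (compf g f)) &
      (forall P f, F P f ->
         exists g : {ffun gT -> gT}, F (f @: P) g /\ {in P, forall x, g (f x) = x})].

Definition sub_fsys (F' F : fsys) : Prop := forall P f, F' P f -> F P f.

Definition generated_fsys (S : {set gT}) (F1 F2 F : fsys) : Prop :=
  [/\ is_fusion_system S F, sub_fsys F1 F, sub_fsys F2 F &
      forall G, is_fusion_system S G -> sub_fsys F1 G -> sub_fsys F2 G ->
        sub_fsys F G].

Definition homset (F : fsys) (P T : {set gT}) : {set {ffun gT -> gT}} :=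
  [set f | F P f & f @: P \subset T].

Definition fiso (F : fsys) (P Q : {set gT}) : bool :=
  [exists f : {ffun gT -> gT}, F P f && (f @: P == Q)].

Definition family_closed (S : {set gT}) (F : fsys) (C : {set {set gT}}) : Prop :=
  [/\ (forall Q, Q \in C -> group_set Q && (Q \subset S)),
      (forall Q f, Q \in C -> F Q f -> f @: Q \in C) &
      (forall Q R, Q \in C -> group_set R -> Q \subset R -> R \subset S ->
         R \in C)].

Definition rep_rel (H : fsys) (P : {set gT}) (f g : {ffun gT -> gT}) : bool :=
  [exists th : {ffun gT -> gT},
     [&& H (f @: P) th, th @: (f @: P) == g @: P &
         [forall x in P, th (f x) == g x]]].

Definition rep_class (F H : fsys) (P SH : {set gT}) (f : {ffun gT -> gT}) :
  {set {ffun gT -> gT}} := [set g in homset F P SH | rep_rel H P f g].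

Definition Rep (F H : fsys) (P SH : {set gT}) : {set {set {ffun gT -> gT}}} :=
  [set rep_class F H P SH f | f in homset F P SH].

(* The bipartite graph Rep_F(P, Lambda): vertices Rep_F(P,F1) (tagged inl)
   and Rep_F(P,F2) (tagged inr); edges Rep_F(P,Fe); the edge [phi]_Fe joins
   [phi]_F2 and [iota phi]_F1 (iota phi is the same function as phi). *)
Definition RepV (F F1 F2 : fsys) (P S S' : {set gT}) :
  {set ({set {ffun gT -> gT}} + {set {ffun gT -> gT}})} :=
  inl @: Rep F F1 P S :|: inr @: Rep F F2 P S'.

Definition RepE (F Fe : fsys) (P S' : {set gT}) := Rep F Fe P S'.

Definition erep (e : {set {ffun gT -> gT}}) : {ffun gT -> gT} :=
  odflt [ffun x => x] [pick f in e].

Definition Rep_src (F F2 : fsys) (P S' : {set gT}) (e : {set {ffun gT -> gT}}) :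
  ({set {ffun gT -> gT}} + {set {ffun gT -> gT}}) :=
  inr (rep_class F F2 P S' (erep e)).

Definition Rep_tgt (F F1 : fsys) (P S : {set gT}) (e : {set {ffun gT -> gT}}) :
  ({set {ffun gT -> gT}} + {set {ffun gT -> gT}}) :=
  inl (rep_class F F1 P S (erep e)).

End Fusion.

Section Graph.
Variables (V E : finType) (VS : {set V}) (ES : {set E}) (src tgt : E -> V).

Definition joins (e : E) (u v : V) : bool :=
  ((src e == u) && (tgt e == v)) || ((src e == v) && (tgt e == u)).

(* walk u es vs : starting at u, traverse edges es, visiting successively
   the vertices vs (so the walk ends at last u vs). *)
Fixpoint walk (u : V) (es : seq E) (vs : seq V) : bool :=
  match es, vs with
  | [::], [::] => true
  | e :: es', v :: vs' => [&& e \in ES, joins e u v & walk v es' vs']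
  | _, _ => false
  end.

Definition gconnected : Prop :=
  forall u v, u \in VS -> v \in VS ->
    exists es vs, walk u es vs && (last u vs == v).

(* a cycle: a closed walk of length >= 1 with pairwise distinct edges and
   pairwise distinct vertices (loops and multiple edges count as cycles) *)
Definition has_cycle : Prop :=
  exists u es vs, [&& es != [::], walk u es vs, last u vs == u, uniq es & uniq vs].

Definition is_tree : Prop := VS != set0 /\ gconnected /\ ~ has_cycle.

(* H_1(graph; R) = 0, i.e. the boundary map R^ES -> R^VS,
   e |-> tgt e - src e, has trivial kernel (no 2-cells). *)
Definition H1_trivial (R : comPzRingType) : Prop :=
  forall c : {ffun E -> R},
    (forall e, e \notin ES -> c e = 0%R) ->
    (forall v, (\sum_(e in ES | tgt e == v) c e - \sum_(e in ES | src e == v) c e = 0)%R) ->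
    c = 0%R.

End Graph.

From mathcomp Require Import all_boot all_order all_algebra all_fingroup all_solvable.
Set Implicit Arguments. Unset Strict Implicit. Unset Printing Implicit Defensive.
Import GRing.Theory.

(* Connectedness: the F-morphisms f such that [f \o chi]_F1 stays in the
   component of [chi]_F1 for every chi : P -> S form a fusion system containing
   F1 and F2, hence all of F; thus every vertex is joined to [id_P]_F1.
   Acyclicity: as Hom_Fe is the intersection of Hom_F1 and Hom_F2 on the
   F-conjugates of P, two edges with the same ends coincide; and under (1) or
   (2) every F2-vertex of degree at least 2 is the class of an F2-morphism, so
   there is at most one such vertex.  A cycle would pass through two of them,
   and a 1-cycle vanishes first on the edges at non-branching F2-vertices,
   then on the others. *)

Section Walks.
Variables (V E : finType) (ES : {set E}) (src tgt : E -> V).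
Local Notation walk := (walk ES src tgt).
Local Notation joins := (joins src tgt).

Lemma joinsC e u v : joins e u v = joins e v u.
Proof. by rewrite /joins orbC. Qed.

Lemma walk_size u es vs : walk u es vs -> size es = size vs.
Proof. by elim: es u vs => [|e es IH] u [|v vs] //= /and3P[_ _ /IH ->]. Qed.

Lemma walk_cat u es1 vs1 es2 vs2 : size es1 = size vs1 ->
  walk u (es1 ++ es2) (vs1 ++ vs2) = walk u es1 vs1 && walk (last u vs1) es2 vs2.
Proof. by elim: es1 u vs1 => [|e es IH] u [|v vs] //= [/IH ->]; rewrite !andbA. Qed.

Definition adjacent : rel V := fun u v => [exists e in ES, joins e u v].

Lemma adjacent_sym : symmetric adjacent.
Proof. by move=> u v; apply: eq_existsb => e; rewrite joinsC. Qed.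

Lemma connect_walk u v :
  connect adjacent u v -> exists es vs, walk u es vs && (last u vs == v).
Proof.
case/connectP=> p + ->; elim: p u => [|w p IH] u /=.
  by exists [::], [::]; rewrite /= eqxx.
case/andP=> /exists_inP[e eE jn] /IH[es [vs w_es]].
by exists (e :: es), (w :: vs); rewrite /= eE jn.
Qed.

Lemma gconnected_hub (VS : {set V}) h :
  (forall v, v \in VS -> connect adjacent h v) -> gconnected VS ES src tgt.
Proof.
move=> hub u v /hub hu /hub hv; apply: connect_walk.
by rewrite (sym_connect_sym adjacent_sym) in hu; apply: connect_trans hu hv.
Qed.

Definition is_cycle u es vs :=
  [&& es != [::], walk u es vs, last u vs == u, uniq es & uniq vs].

Lemma is_cycle_rot u e es v vs :
  is_cycle u (e :: es) (v :: vs) -> is_cycle v (rcons es e) (rcons vs v).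
Proof.
case/and5P=> _ /= /and3P[eE jn w] /eqP lst /andP[ne ue] /andP[nv uv].
apply/and5P; split; rewrite ?rcons_uniq ?ne ?ue ?nv ?uv ?last_rcons //.
  by rewrite -size_eq0 size_rcons.
by rewrite -!cats1 walk_cat ?(walk_size w) //= w eE lst jn.
Qed.

End Walks.

Section Bipartite.
Variables (A B E : finType) (ES : {set E}) (s : E -> B) (t : E -> A).
Let src e : A + B := inr (s e).
Let tgt e : A + B := inl (t e).

Definition branching (b : B) : bool :=
  [exists e1, exists e2, [&& e1 \in ES, e2 \in ES, e1 != e2, s e1 == b & s e2 == b]].

Lemma branchingI e1 e2 : e1 \in ES -> e2 \in ES -> e1 != e2 -> s e1 = s e2 ->
  branching (s e1).
Proof.
move=> E1 E2 ne12 s12; apply/existsP; exists e1; apply/existsP; exists e2.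
by rewrite E1 E2 ne12 s12 !eqxx.
Qed.

Hypothesis no_parallel : {in ES &, forall e e', s e = s e' -> t e = t e' -> e = e'}.
Hypothesis branching_unique : forall b b', branching b -> branching b' -> b = b'.

Lemma joins_inr e b v : joins src tgt e (inr b) v -> s e = b /\ v = inl (t e).
Proof. by rewrite /joins /src /tgt; case/orP=> /andP[/eqP + /eqP] => [[->] <- | //]. Qed.

Lemma joins_inl e a v : joins src tgt e (inl a) v -> t e = a /\ v = inr (s e).
Proof. by rewrite /joins /src /tgt; case/orP=> /andP[/eqP + /eqP] => [// | <- [->]]. Qed.

(* Two steps along the cycle lie a right vertex entered and left by distinct edges;
   a cycle of length 2 would consist of two parallel edges. *)
Lemma is_cycle_next_branching b es vs : is_cycle ES src tgt (inr b) es vs ->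
  exists b' es' vs', [/\ branching b', b' != b & is_cycle ES src tgt (inr b') es' vs'].
Proof.
move=> cyc; case/and5P: (cyc) => _.
case: es vs cyc => [|e1 es] [|v1 vs] // cyc /and3P[E1 /joins_inr[s1 ?] w]; subst v1.
case: es vs w cyc => [|e2 es] [|v2 vs] //= w cyc.
case/and3P: w => E2 /joins_inl[t2 ?] w; subst v2.
case: es vs w cyc => [|e3 es] [|v3 vs] //= w cyc.
  move=> /eqP[s2]; rewrite !inE andbT => /negP[]; apply/eqP/no_parallel => //.
  by rewrite s1 s2.
case/and3P: w => E3 /joins_inr[s3 _] _ lst /and4P[_ ne23 _ _] /and4P[_ nv2 _ _].
exists (s e2), (rcons (rcons (e3 :: es) e1) e2),
  (rcons (rcons (v3 :: vs) (inl (t e1))) (inr (s e2))).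
split; last exact: is_cycle_rot (is_cycle_rot cyc).
  apply: (@branchingI e2 e3) => //; apply: contraNneq ne23 => ->; exact: mem_head.
by apply: contraNneq nv2 => eb; rewrite eb -(eqP lst) mem_last.
Qed.

Lemma has_cycle_inr : has_cycle ES src tgt ->
  exists b es vs, is_cycle ES src tgt (inr b) es vs.
Proof.
case=> -[a|b] [es [vs cyc]]; last by exists b, es, vs.
case/and5P: (cyc); case: es vs cyc => [|e es] [|v vs] // cyc _.
case/and3P=> _ /joins_inl[_ ve] _; rewrite ve in cyc.
by exists (s e), (rcons es e), (rcons vs (inr (s e))); apply: (is_cycle_rot cyc).
Qed.

Lemma bipartite_acyclic : ~ has_cycle ES src tgt.
Proof.
case/has_cycle_inr=> b [es [vs /is_cycle_next_branching[b1 [es1 [vs1 [br1 _ cyc1]]]]]].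
have [b2 [_ [_ [br2 nb21 _]]]] := is_cycle_next_branching cyc1.
by rewrite (branching_unique br2 br1) eqxx in nb21.
Qed.

Lemma bipartite_H1_trivial (R : comPzRingType) : H1_trivial ES src tgt R.
Proof.
move=> c c0 c_cycle.
have c_leaf e : e \in ES -> ~~ branching (s e) -> c e = 0%R.
  move=> E1 nbr; move: (c_cycle (src e)).
  rewrite big_pred0 => [|x]; last by rewrite andbF.
  rewrite (bigD1 e) /= ?E1 ?eqxx // big1 ?addr0 ?sub0r => [/eqP|x].
    by rewrite oppr_eq0 => /eqP.
  case/andP=> /andP[E2 /eqP[sx]] nx; apply: contraNeq nbr => _.
  by rewrite -sx (@branchingI x e).
apply/ffunP=> e; rewrite ffunE.
have [E1|] := boolP (e \in ES); last exact: c0.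
have [br|] := boolP (branching (s e)); last exact: c_leaf.
(* The other edges at the left end [t e] lead to right vertices distinct from
   the branching vertex [s e], hence to non-branching ones. *)
move: (c_cycle (tgt e)); rewrite [X in (_ - X)%R]big_pred0 => [|x]; last by rewrite andbF.
rewrite subr0 (bigD1 e) /= ?E1 ?eqxx // big1 ?addr0 // => x.
case/andP=> /andP[E2 /eqP[tx]] nx; apply: c_leaf => //; apply: contra nx => brx.
by apply/eqP/no_parallel => //; apply: branching_unique.
Qed.

End Bipartite.

Section FusionSystem.
Variables (gT : finGroupType) (SH : {set gT}) (H : fsys gT).
Implicit Types (P Q R : {set gT}) (f g th : {ffun gT -> gT}).
Local Notation idf := (conjf (1%g : gT)).

Lemma compfE g f x : compf g f x = g (f x).
Proof. by rewrite ffunE. Qed.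

Lemma imset_compf g f P : compf g f @: P = g @: (f @: P).
Proof. by rewrite -imset_comp; apply: eq_imset => x; rewrite compfE. Qed.

Lemma idfE x : idf x = x.
Proof. by rewrite ffunE conjg1. Qed.

Lemma imset_idf P : idf @: P = P.
Proof. by rewrite (eq_imset _ idfE) imset_id. Qed.

Lemma imset_cancel_in f g P : {in P, forall x, g (f x) = x} -> g @: (f @: P) = P.
Proof. by move=> gK; rewrite -imset_comp (eq_in_imset (g := id)) ?imset_id. Qed.

Hypothesis HH : is_fusion_system SH H.

Lemma fsys_dom P f : H P f -> group_set P /\ P \subset SH.
Proof. by case: HH => hom _ _ _ _ /hom[]. Qed.

Lemma fsys_img P f : H P f -> f @: P \subset SH.
Proof. by case: HH => hom _ _ _ _ /hom[]. Qed.

Lemma fsys_ext P f g : H P f -> {in P, f =1 g} -> H P g.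
Proof. by case: HH => _ ext _ _ _; apply: ext. Qed.

Lemma fsys_id P : group_set P -> P \subset SH -> H P idf.
Proof.
case: HH => _ _ conj _ _ gP sPS; apply: conj => //.
by apply: (subsetP sPS); case/andP: gP.
Qed.

Lemma fsys_comp P Q f g : H P f -> H Q g -> f @: P \subset Q -> H P (compf g f).
Proof. by case: HH => _ _ _ comp _; apply: comp. Qed.

Lemma fsys_inv P f : H P f -> exists2 g, H (f @: P) g & {in P, forall x, g (f x) = x}.
Proof. by case: HH => _ _ _ _ inv /inv[g []]; exists g. Qed.

Lemma fsys_img_group P f : H P f -> group_set (f @: P).
Proof. by case/fsys_inv=> g /fsys_dom[]. Qed.

Lemma fsys_restr P Q f : H P f -> group_set Q -> Q \subset P -> H Q f.
Proof.
move=> Hf gQ sQP; have [_ sPS] := fsys_dom Hf.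
have := fsys_comp (fsys_id gQ (subset_trans sQP sPS)) Hf.
rewrite imset_idf => /(_ sQP) Hc; apply: fsys_ext Hc _ => x _.
by rewrite compfE idfE.
Qed.

Lemma homset_compf P Q R chi f : chi \in homset H P Q -> H Q f -> f @: Q \subset R ->
  compf f chi \in homset H P R.
Proof.
rewrite !inE => /andP[Hchi schiQ] Hf sfQR; rewrite (fsys_comp Hchi Hf schiQ) imset_compf.
exact: subset_trans (imsetS f schiQ) sfQR.
Qed.

Lemma rep_relP P f g :
  reflect (exists2 th, H (f @: P) th & {in P, forall x, th (f x) = g x})
          (rep_rel H P f g).
Proof.
apply: (iffP existsP) => [[th /and3P[Hth _ /forall_inP thf]] | [th Hth thf]].
  by exists th => // x /thf/eqP.
exists th; rewrite Hth -imset_comp (eq_in_imset thf) eqxx /=.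
by apply/forall_inP => x /thf ->.
Qed.

Lemma fsys_rep_rel P f g : H P f -> H P g -> rep_rel H P f g.
Proof.
move=> Hf Hg; have [f' Hf' f'K] := fsys_inv Hf.
apply/rep_relP; exists (compf g f') => [|x xP]; last by rewrite compfE f'K.
by apply: fsys_comp Hf' Hg _; rewrite imset_cancel_in.
Qed.

Lemma rep_rel_refl P f : group_set (f @: P) -> f @: P \subset SH -> rep_rel H P f f.
Proof. by move=> gfP sfPS; apply/rep_relP; exists idf => [|x]; rewrite ?fsys_id ?idfE. Qed.

Lemma rep_rel_sym P f g : rep_rel H P f g -> rep_rel H P g f.
Proof.
case/rep_relP=> th Hth thf; have [th' Hth' th'K] := fsys_inv Hth.
have gP : th @: (f @: P) = g @: P by rewrite -imset_comp; apply: eq_in_imset.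
rewrite gP in Hth'; apply/rep_relP; exists th' => // x xP.
by rewrite -thf // th'K // imset_f.
Qed.

Lemma rep_rel_trans P f g k : rep_rel H P f g -> rep_rel H P g k -> rep_rel H P f k.
Proof.
case/rep_relP=> th1 H1 th1f /rep_relP[th2 H2 th2g].
apply/rep_relP; exists (compf th2 th1) => [|x xP]; last by rewrite compfE th1f // th2g.
by apply: fsys_comp H1 H2 _; rewrite -imset_comp (eq_in_imset th1f).
Qed.

End FusionSystem.

Lemma rep_rel_sub (gT : finGroupType) (H H' : fsys gT) (P : {set gT})
    (f g : {ffun gT -> gT}) :
  sub_fsys H' H -> rep_rel H' P f g -> rep_rel H P f g.
Proof. by move=> sH'H /rep_relP[th /sH'H Hth thf]; apply/rep_relP; exists th. Qed.

Lemma rep_class_ext (gT : finGroupType) (F H : fsys gT) (P X : {set gT})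
    (f f' : {ffun gT -> gT}) :
  {in P, f =1 f'} -> rep_class F H P X f = rep_class F H P X f'.
Proof.
move=> eq_ff'; apply/setP => g; rewrite !inE /rep_rel (eq_in_imset eq_ff').
by congr (_ && _); apply: eq_existsb => th; congr [&& _, _ & _];
  apply: eq_forallb_in => x xP; rewrite eq_ff'.
Qed.

Section RepClasses.
Variables (gT : finGroupType) (SH S0 : {set gT}) (H F : fsys gT).
Hypotheses (HH : is_fusion_system SH H) (HF : is_fusion_system S0 F).
Implicit Types (P X : {set gT}) (f g : {ffun gT -> gT}).

Lemma rep_class_eq P X f g : rep_rel H P f g -> rep_class F H P X f = rep_class F H P X g.
Proof.
move=> fg; apply/setP => k; rewrite !inE; congr (_ && _); apply/idP/idP.
  by move=> fk; exact: (rep_rel_trans HH (rep_rel_sym HH fg) fk).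
by move=> gk; exact: (rep_rel_trans HH fg gk).
Qed.

Lemma rep_rel_hom_refl P X g : X \subset SH -> g \in homset F P X -> rep_rel H P g g.
Proof.
move=> sXS; rewrite inE => /andP[Fg sgX].
exact: rep_rel_refl (fsys_img_group HF Fg) (subset_trans sgX sXS).
Qed.

Lemma rep_class_rel P X f g : X \subset SH -> g \in homset F P X ->
  rep_class F H P X f = rep_class F H P X g -> rep_rel H P f g.
Proof.
move=> sXS gX fg.
have : g \in rep_class F H P X g by rewrite inE gX (rep_rel_hom_refl sXS).
by rewrite -fg inE => /andP[].
Qed.

Lemma erep_spec P X e : X \subset SH -> e \in Rep F H P X ->
  erep e \in homset F P X /\ e = rep_class F H P X (erep e).
Proof.
move=> sXS /imsetP[f fX ->]; rewrite /erep; case: pickP => [k | no_k] /=.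
  by rewrite inE => /andP[kX fk]; split=> //; apply: rep_class_eq.
by have := no_k f; rewrite inE fX (rep_rel_hom_refl sXS).
Qed.

End RepClasses.

Section RepGraph.
Variables (gT : finGroupType) (S S' : {group gT}) (F1 F2 Fe F : fsys gT) (P : {set gT}).
Hypotheses (sS'S : S' \subset S) (HF1 : is_fusion_system S F1)
  (HF2 : is_fusion_system S' F2) (HFe : is_fusion_system S' Fe)
  (sFeF1 : sub_fsys Fe F1) (sFeF2 : sub_fsys Fe F2) (genF : generated_fsys S F1 F2 F).
Implicit Types (R : {set gT}) (f g chi : {ffun gT -> gT}).

Local Notation cl1 f := (rep_class F F1 P S f).
Local Notation cl2 f := (rep_class F F2 P S' f).
Local Notation cle f := (rep_class F Fe P S' f).
Local Notation edges := (RepE F Fe P S').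
Local Notation src := (Rep_src F F2 P S').
Local Notation tgt := (Rep_tgt F F1 P S).
Local Notation adj := (adjacent edges src tgt).

Let HF : is_fusion_system S F. Proof. by case: genF. Qed.
Let sF1F : sub_fsys F1 F. Proof. by case: genF. Qed.
Let sF2F : sub_fsys F2 F. Proof. by case: genF. Qed.
Let sFeF : sub_fsys Fe F. Proof. by move=> R f /sFeF1/sF1F. Qed.

Lemma homset_S'S f : f \in homset F P S' -> f \in homset F P S.
Proof. by rewrite !inE => /andP[-> /subset_trans]; apply. Qed.

Lemma edge_spec e : e \in edges -> erep e \in homset F P S' /\ e = cle (erep e).
Proof. exact: (erep_spec HFe HF (subxx _)). Qed.

Lemma edge_ends f : f \in homset F P S' ->
  [/\ cle f \in edges, src (cle f) = inr (cl2 f) & tgt (cle f) = inl (cl1 f)].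
Proof.
move=> fS'; have eE : cle f \in edges by apply: imset_f.
have [rS' /(rep_class_rel HFe HF (subxx _) rS') fr] := edge_spec eE.
split=> //; rewrite /Rep_src /Rep_tgt; [congr inr | congr inl]; symmetry.
  exact/(rep_class_eq F HF2)/(rep_rel_sub sFeF2).
exact/(rep_class_eq F HF1)/(rep_rel_sub sFeF1).
Qed.

Lemma adjacent_classes f : f \in homset F P S' -> adj (inl (cl1 f)) (inr (cl2 f)).
Proof.
case/edge_ends=> eE esrc etgt; apply/exists_inP; exists (cle f) => //.
by rewrite /joins esrc etgt !eqxx orbT.
Qed.

Section Connected.
Hypotheses (gP : group_set P) (sPS : P \subset S).
Local Notation idf := (conjf (1%g : gT)).

Definition linking_fsys : fsys gT := fun R f =>
  F R f && [forall chi in homset F P R,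
              connect adj (inl (cl1 chi)) (inl (cl1 (compf f chi)))].

Lemma linking_F1 : sub_fsys F1 linking_fsys.
Proof.
move=> R f F1f; rewrite /linking_fsys sF1F //=; apply/forall_inP => chi chiR.
have := chiR; rewrite inE => /andP[Fchi schiR].
suff chi_fchi : rep_rel F1 P chi (compf f chi).
  by rewrite (rep_class_eq F HF1 _ chi_fchi) connect0.
apply/rep_relP; exists f => [|x _]; last by rewrite compfE.
exact: (fsys_restr HF1 F1f (fsys_img_group HF Fchi) schiR).
Qed.

Lemma linking_F2 : sub_fsys F2 linking_fsys.
Proof.
move=> R f F2f; rewrite /linking_fsys sF2F //=; apply/forall_inP => chi chiR.
have := chiR; rewrite inE => /andP[Fchi schiR]; have [_ sRS'] := fsys_dom HF2 F2f.
have chiS' : chi \in homset F P S' by rewrite inE Fchi (subset_trans schiR).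
have fchiS' := homset_compf HF chiR (sF2F F2f) (fsys_img HF2 F2f).
have cl2E : cl2 chi = cl2 (compf f chi).
  apply: (rep_class_eq F HF2); apply/rep_relP; exists f => [|x _]; last by rewrite compfE.
  exact: (fsys_restr HF2 F2f (fsys_img_group HF Fchi) schiR).
apply: connect_trans (connect1 (adjacent_classes chiS')) _.
by rewrite cl2E connect1 // adjacent_sym adjacent_classes.
Qed.

Lemma linking_is_fusion_system : is_fusion_system S linking_fsys.
Proof.
split.
- by move=> R f /andP[Ff _]; case: HF => hom _ _ _ _; apply: hom.
- move=> R f g /andP[Ff /forall_inP link] fg; rewrite /linking_fsys (fsys_ext HF Ff fg) /=.
  apply/forall_inP => chi chiR; have := chiR; rewrite inE => /andP[_ /subsetP schiR].
  suff -> : cl1 (compf g chi) = cl1 (compf f chi) by apply: link.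
  by apply: rep_class_ext => x xP; rewrite !compfE fg // schiR ?imset_f.
- by move=> R a gR sRS aS; apply: linking_F1; case: HF1 => _ _ conj _ _; apply: conj.
- move=> Q R f g /andP[Ff /forall_inP linkf] /andP[Fg /forall_inP linkg] sfQR.
  rewrite /linking_fsys (fsys_comp HF Ff Fg sfQR) /=; apply/forall_inP => chi chiQ.
  have -> : compf (compf g f) chi = compf g (compf f chi).
    by apply/ffunP => x; rewrite !compfE.
  apply: connect_trans (linkf _ chiQ) (linkg _ _).
  exact: (homset_compf HF chiQ Ff sfQR).
- move=> R f /andP[Ff /forall_inP link]; have [g Fg gK] := fsys_inv HF Ff.
  exists g; split=> //; rewrite /linking_fsys Fg /=; apply/forall_inP => chi chifR.
  have gchiR : compf g chi \in homset F P R.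
    by apply: (homset_compf HF chifR Fg); rewrite imset_cancel_in.
  have -> : cl1 chi = cl1 (compf f (compf g chi)).
    apply: rep_class_ext => x xP; rewrite !compfE.
    have := chifR; rewrite inE => /andP[_ /subsetP/(_ (chi x) (imset_f _ xP))].
    by case/imsetP=> y yR ->; rewrite gK.
  by rewrite (sym_connect_sym (@adjacent_sym _ _ edges src tgt)) link.
Qed.

Lemma F_sub_linking : sub_fsys F linking_fsys.
Proof.
case: genF => _ _ _ minF; exact: minF linking_is_fusion_system linking_F1 linking_F2.
Qed.

Lemma idf_homset : idf \in homset F P P.
Proof. by rewrite inE imset_idf subxx andbT; apply: (fsys_id HF gP sPS). Qed.

Lemma connect_id_class f : f \in homset F P S -> connect adj (inl (cl1 idf)) (inl (cl1 f)).
Proof.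
rewrite inE => /andP[/F_sub_linking/andP[_ /forall_inP link] _].
have -> : cl1 f = cl1 (compf f idf) by apply: rep_class_ext => x _; rewrite compfE idfE.
exact: link idf_homset.
Qed.

Lemma Rep_graph_nonempty : RepV F F1 F2 P S S' != set0.
Proof.
apply/set0Pn; exists (inl (cl1 idf)); rewrite inE !imset_f //.
by rewrite inE (fsys_id HF) // imset_idf.
Qed.

Lemma Rep_graph_connected : gconnected (RepV F F1 F2 P S S') edges src tgt.
Proof.
apply: (gconnected_hub (h := inl (cl1 idf))) => v.
rewrite inE => /orP[] /imsetP[_ /imsetP[f fS ->] ->]; first exact: connect_id_class.
exact: connect_trans (connect_id_class (homset_S'S fS)) (connect1 (adjacent_classes fS)).
Qed.

End Connected.

Section Acyclic.
Hypothesis homset_Fe_meet : forall Q, fiso F P Q ->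
  homset Fe Q S' = homset F1 Q S' :&: homset F2 Q S'.

Lemma fiso_img f : F P f -> fiso F P (f @: P).
Proof. by move=> Ff; apply/existsP; exists f; rewrite Ff eqxx. Qed.

Lemma rep_rel_Fe f f' : f \in homset F P S' -> f' \in homset F P S' ->
  rep_rel F1 P f f' -> rep_rel F2 P f f' -> rep_rel Fe P f f'.
Proof.
rewrite !inE => /andP[Ff _] /andP[_ sf'S'].
move=> /rep_relP[th1 F1th1 th1f] /rep_relP[th2 F2th2 th2f].
have F1th2 : F1 (f @: P) th2.
  by apply: (fsys_ext HF1 F1th1) => _ /imsetP[x xP ->]; rewrite th1f ?th2f.
have sth2 : th2 @: (f @: P) \subset S' by rewrite -imset_comp (eq_in_imset th2f).
have : th2 \in homset Fe (f @: P) S'.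
  by rewrite homset_Fe_meet ?fiso_img // !inE F1th2 F2th2 sth2.
by rewrite inE => /andP[Feth2 _]; apply/rep_relP; exists th2.
Qed.

Lemma Rep_no_parallel : {in edges &, forall e e',
  cl2 (erep e) = cl2 (erep e') -> cl1 (erep e) = cl1 (erep e') -> e = e'}.
Proof.
move=> e e' /edge_spec[eS' de] /edge_spec[e'S' de'].
move=> /(rep_class_rel HF2 HF (subxx _) e'S') rel2.
move=> /(rep_class_rel HF1 HF (subxx _) (homset_S'S e'S')) rel1.
by rewrite de de'; apply: (rep_class_eq F HFe); apply: rep_rel_Fe.
Qed.

Lemma Rep_no_branching_of_F1 : homset F P S' = homset F1 P S' ->
  {in edges &, forall e e', cl2 (erep e) = cl2 (erep e') -> e = e'}.
Proof.
move=> homF1 e e' eE e'E cl2E; apply: Rep_no_parallel => //.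
have [eS' _] := edge_spec eE; have [e'S' _] := edge_spec e'E.
apply: (rep_class_eq F HF1); apply: (fsys_rep_rel HF1).
  by move: eS'; rewrite homF1 inE => /andP[].
by move: e'S'; rewrite homF1 inE => /andP[].
Qed.

Lemma branching_edge_F2_of_aut : homset F P P = homset F2 P P ->
  (forall Q, fiso F P Q -> ~~ fiso Fe P Q -> homset Fe Q S' = homset F2 Q S') ->
  forall e e', e \in edges -> e' \in edges -> e != e' ->
  cl2 (erep e) = cl2 (erep e') -> F2 P (erep e).
Proof.
move=> autF2 homFe2 e e' /edge_spec[eS' de] /edge_spec[e'S' de'] ne cl2E.
have := eS'; rewrite inE => /andP[Ff _].
(* If [erep e @: P] is Fe-conjugate to P through a, then erep e is a composed
   with an F-automorphism of P, which lies in F2; otherwise the F2-isomorphism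
   relating the two edges is an Fe-isomorphism, so the edges coincide. *)
have [/existsP[a /andP[Fea /eqP aP]] | not_Fe_iso] := boolP (fiso Fe P (erep e @: P)).
  have [a' Fea' a'K] := fsys_inv HFe Fea; rewrite aP in Fea'.
  have alphaP : compf a' (erep e) @: P = P by rewrite imset_compf -aP imset_cancel_in.
  have : compf a' (erep e) \in homset F P P.
    by rewrite inE alphaP subxx (fsys_comp HF Ff (sFeF Fea')).
  rewrite autF2 inE => /andP[F2alpha _].
  have := fsys_comp HF2 F2alpha (sFeF2 Fea); rewrite alphaP subxx => /(_ isT) F2a_alpha.
  apply: (fsys_ext HF2 F2a_alpha) => x xP; rewrite !compfE.
  have /imsetP[y yP ->] : erep e x \in a @: P by rewrite aP imset_f.
  by rewrite a'K.
case/negP: ne; rewrite de de'; apply/eqP/(rep_class_eq F HFe).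
have /rep_relP[th F2th thf] := rep_class_rel HF2 HF (subxx _) e'S' cl2E.
have : th \in homset Fe (erep e @: P) S'.
  rewrite homFe2 ?fiso_img // inE F2th -imset_comp (eq_in_imset thf).
  by have := e'S'; rewrite inE => /andP[].
by rewrite inE => /andP[Feth _]; apply/rep_relP; exists th.
Qed.

Lemma Rep_unique_branching :
  (homset F P S' = homset F1 P S' \/ homset F P S' = homset F2 P S') \/
  (homset F P P = homset F2 P P /\
   forall Q, fiso F P Q -> ~~ fiso Fe P Q -> homset Fe Q S' = homset F2 Q S') ->
  forall b b', branching edges (fun e => cl2 (erep e)) b ->
    branching edges (fun e => cl2 (erep e)) b' -> b = b'.
Proof.
move=> hom_cases.
have edge_F2 e e' : e \in edges -> e' \in edges -> e != e' ->
    cl2 (erep e) = cl2 (erep e') -> F2 P (erep e).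
  case: hom_cases => [[homF1 | homF2] | [autF2 homFe2]] eE e'E ne cl2E.
  - by case/eqP: ne; apply: (Rep_no_branching_of_F1 homF1).
  - by have [] := edge_spec eE; rewrite homF2 inE => /andP[].
  - exact: (branching_edge_F2_of_aut autF2 homFe2 eE e'E ne cl2E).
move=> b b' /existsP[e1 /existsP[e2 /and5P[E1 E2 ne12 /eqP<- /eqP cl21]]].
move=> /existsP[e3 /existsP[e4 /and5P[E3 E4 ne34 /eqP<- /eqP cl43]]].
apply: (rep_class_eq F HF2); apply: (fsys_rep_rel HF2).
  exact: (edge_F2 e1 e2 E1 E2 ne12 (esym cl21)).
exact: (edge_F2 e3 e4 E3 E4 ne34 (esym cl43)).
Qed.

End Acyclic.

End RepGraph.

Theorem lemma4p1 (gT : finGroupType) (p : nat) (S S' : {group gT})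
  (F1 F2 Fe F : fsys gT) (C : {set {set gT}}) (P : {set gT}) :
  prime p -> (p.-group S)%g -> S' \subset S ->
  is_fusion_system S F1 -> is_fusion_system S' F2 -> is_fusion_system S' Fe ->
  sub_fsys Fe F1 -> sub_fsys Fe F2 ->
  generated_fsys S F1 F2 F ->
  family_closed S F C -> gval S' \in C ->
  P \in C ->
  (forall Q, fiso F P Q ->
     homset Fe Q S' = homset F1 Q S' :&: homset F2 Q S') ->
  ((homset F P S' = homset F1 P S' \/ homset F P S' = homset F2 P S') \/
   (homset F P P = homset F2 P P /\
    forall Q, fiso F P Q -> ~~ fiso Fe P Q -> homset Fe Q S' = homset F2 Q S')) ->
  is_tree (RepV F F1 F2 P S S') (RepE F Fe P S')
          (Rep_src F F2 P S') (Rep_tgt F F1 P S) /\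
  (forall R : comPzRingType,
     H1_trivial (RepE F Fe P S') (Rep_src F F2 P S') (Rep_tgt F F1 P S) R).
Proof.
move=> _ _ sS'S HF1 HF2 HFe sFeF1 sFeF2 genF [memC _ _] _ PC meetFe hom_cases.
have /andP[gP sPS] := memC P PC.
have no_parallel := Rep_no_parallel sS'S HF1 HF2 HFe genF meetFe.
have unique_branching :=
  Rep_unique_branching sS'S HF1 HF2 HFe sFeF1 sFeF2 genF meetFe hom_cases.
split; last by move=> R; apply: (bipartite_H1_trivial no_parallel unique_branching).
split; first by apply: Rep_graph_nonempty.
split; first by apply: Rep_graph_connected.
exact: (bipartite_acyclic no_parallel unique_branching).
Qed.
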